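(* Let $(H,u_1u_2u_3)$ be a lucky tracker of a graph $G$ and let $S$ be a full star-cutset of $H$. Then at least one of the following holds. (B1) For each $u_1u_2u_3$-hole $C$ of $H$, there exists a connected component $B$ of $H\setminus S$ such that $C$ is a subgraph of $H[V(B)\cup S]$. (B2) There are two non-adjacent nodes $s_1,s_2$ of $S$ and two connected components $B_1,B_2$ of $H\setminus S$ with $\{s_1,s_2\}\subseteq N_H(B_1)$ and $\{s_1,s_2\}\subseteq N_H(B_2)$.
   Context: All graphs are finite, simple and undirected. For a subgraph $B$ of $H$, $N_H(B)$ is the set of nodes outside $V(B)$ adjacent to some node of $B$. A hole is an induced simple cycle with at least four nodes; it is even if it has an even number of nodes. A shortest even hole of $H$ is an even hole of $H$ with the minimum number of nodes. For a hole $C$ of $H$ and $x\in V(H)\setminus V(C)$, let $N_C(x)=N_H(x)\cap V(C)$; $x$ is a major node if $N_C(x)$ contains three distinct pairwise non-adjacent nodes; $M_H(C)$ is the set of major nodes. $N_H^{2,2}(C)$ is the set of non-major nodes $x$ adjacent to $C$ such that $C[N_C(x)]$ has exactly two connected components, each with two nodes. $C$ is clean in $H$ if $M_H(C)=N_H^{2,2}(C)=\varnothing$. A tracker of $G$ is a pair $(H,u_1u_2u_3)$ where $H$ is an induced subgraph of $G$ and $u_1u_2u_3$ is a path on three nodes of $H$. A $u_1u_2u_3$-hole of $H$ is a clean shortest even hole $C$ of $H$ such that $u_1u_2u_3$ is a path of $C$; the tracker is lucky if $H$ has a $u_1u_2u_3$-hole. A subset $S\subseteq V(H)$ is a star-cutset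 of $H$ if $S\subseteq N_H[s]$ for some $s\in S$ (closed neighborhood) and $H\setminus S$ has more connected components than $H$; it is a full star-cutset if moreover $S=N_H[s]$ for some $s\in S$. *)

From mathcomp Require Import all_boot.
Set Implicit Arguments. Unset Strict Implicit. Unset Printing Implicit Defensive.

(* An induced subgraph H of G is given by its vertex set VH : {set T};
   an induced subgraph is identified with its vertex set. *)

Section Graphs.
Variables (T : finType) (e : rel T).

Definition simple_graph := symmetric e /\ irreflexive e.

Definition induced_rel (A : {set T}) : rel T :=
  [rel x y | [&& e x y, x \in A & y \in A]].

Definition components (A : {set T}) : {set {set T}} :=
  [set [set y in A | connect (induced_rel A) x y] | x in A].

Definition connected_set (A : {set T}) := #|components A| == 1.

Definition nbhd_in (A : {set T}) (x : T) : {set T} := [set y in A | e x y].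

Definition closed_nbhd (VH : {set T}) (s : T) : {set T} := s |: nbhd_in VH s.

Definition nbhd_of_set (VH B : {set T}) : {set T} :=
  [set x in VH :\: B | [exists y in B, e x y]].

Definition hole (C : {set T}) :=
  [/\ 4 <= #|C|, connected_set C & forall x, x \in C -> #|nbhd_in C x| = 2].

Definition hole_of (VH C : {set T}) := C \subset VH /\ hole C.

Definition even_hole_of (VH C : {set T}) := hole_of VH C /\ ~~ odd #|C|.

Definition shortest_even_hole (VH C : {set T}) :=
  even_hole_of VH C /\ forall C', even_hole_of VH C' -> #|C| <= #|C'|.

Definition major (C : {set T}) (x : T) :=
  x \notin C /\
  exists a b c, [/\ [/\ a \in nbhd_in C x, b \in nbhd_in C x & c \in nbhd_in C x],
                    [/\ a != b, b != c & a != c] &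
                    [/\ ~~ e a b, ~~ e b c & ~~ e a c]].

Definition n22 (C : {set T}) (x : T) :=
  [/\ x \notin C, ~ major C x, nbhd_in C x != set0,
      #|components (nbhd_in C x)| = 2 &
      forall K, K \in components (nbhd_in C x) -> #|K| = 2].

Definition clean (VH C : {set T}) :=
  forall x, x \in VH -> ~ major C x /\ ~ n22 C x.

Definition path3 (VH : {set T}) (u1 u2 u3 : T) :=
  [/\ [/\ u1 \in VH, u2 \in VH & u3 \in VH],
      [/\ u1 != u2, u2 != u3 & u1 != u3] & e u1 u2 && e u2 u3].

Definition u_hole (VH : {set T}) (u1 u2 u3 : T) (C : {set T}) :=
  [/\ clean VH C, shortest_even_hole VH C & [/\ u1 \in C, u2 \in C & u3 \in C]].

Definition lucky_tracker (VH : {set T}) (u1 u2 u3 : T) :=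
  path3 VH u1 u2 u3 /\ exists C, u_hole VH u1 u2 u3 C.

Definition star_cutset (VH S : {set T}) :=
  [/\ S \subset VH, exists2 s, s \in S & S \subset closed_nbhd VH s &
      #|components VH| < #|components (VH :\: S)|].

Definition full_star_cutset (VH S : {set T}) :=
  star_cutset VH S /\ exists2 s, s \in S & S = closed_nbhd VH s.

End Graphs.

From mathcomp Require Import all_boot zify.
From Stdlib Require Import Classical.
Set Implicit Arguments. Unset Strict Implicit. Unset Printing Implicit Defensive.

(* Let C be a u1u2u3-hole that lies in no B ∪ S, and S = N[s].  Walking around C we meet two
   nodes outside S in different components of H \ S, so the two arcs of C between them both meet
   S, and s is not on C (otherwise C ∩ S would be a subpath of C).  The neighbours of s on each of
   the two arcs span at most an edge of C, since s is not major.  If both spans are edges, s is in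
   N^{2,2}(C); if exactly one is, s together with the two arcs of C joining consecutive neighbours
   closes two holes of total size |C| + 3, one of which is an even hole shorter than C.  Hence s has
   exactly two, non-adjacent, neighbours on C, and each is adjacent to both components met by C. *)

Definition cyc_adj (n i k : nat) : Prop :=
  k = i.+1 \/ i = k.+1 \/ (i = n.-1 /\ k = 0) \/ (k = n.-1 /\ i = 0).

Lemma extremal_indices (P : pred nat) j n :
  ~~ P 0 -> ~~ P j -> (exists2 i, 0 < i < j & P i) -> (exists2 i, j < i < n & P i) ->
  exists a a' b' b, [/\ 0 < a <= a', a' < j < b', b' <= b < n,
    [/\ P a, P a', P b' & P b] &
    forall i, i < n -> P i -> a <= i <= a' \/ b' <= i <= b].
Proof.
move=> P0 Pj [i1 i1_range Pi1] [i2 i2_range Pi2].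
have left_ex : exists i, (0 < i < j) && P i by exists i1; rewrite i1_range.
have right_ex : exists i, (j < i < n) && P i by exists i2; rewrite i2_range.
have left_ub i : (0 < i < j) && P i -> i <= j by case/andP => /andP [_ /ltnW].
have right_ub i : (j < i < n) && P i -> i <= n by case/andP => /andP [_ /ltnW].
have [a /andP [a_range Pa] a_min] := ex_minnP left_ex.
have [a' /andP [a'_range Pa'] a'_max] := ex_maxnP left_ex left_ub.
have [b' /andP [b'_range Pb'] b'_min] := ex_minnP right_ex.
have [b /andP [b_range Pb] b_max] := ex_maxnP right_ex right_ub.
exists a, a', b', b; split => //.
- by rewrite (a'_max a) ?a_range ?Pa //; lia.
- lia.
- by rewrite (b_max b') ?b'_range ?Pb' //; lia.
move=> i i_n Pi.
have [i0|i_pos] := posnP i; first by rewrite -i0 Pi in P0.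
have [ij|ji|ijE] := ltngtP i j; last by rewrite -ijE Pi in Pj.
  by left; rewrite a_min ?a'_max // i_pos ij Pi.
by right; rewrite b'_min ?b_max // ji i_n Pi.
Qed.

Section Graph.
Variables (T : finType) (e : rel T).
Hypothesis e_sym : symmetric e.
Hypothesis e_irr : irreflexive e.

Lemma induced_rel_sym (A : {set T}) : symmetric (induced_rel e A).
Proof.
move=> x y; rewrite /induced_rel /= e_sym.
by case: (x \in A); case: (y \in A); rewrite ?andbF ?andbT.
Qed.

Definition component_of (A : {set T}) x := [set y in A | connect (induced_rel e A) x y].

Lemma component_of_in_components (A : {set T}) x :
  x \in A -> component_of A x \in components e A.
Proof. by move=> xA; apply/imsetP; exists x. Qed.

Lemma component_of_id (A : {set T}) x : x \in A -> x \in component_of A x.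
Proof. by move=> xA; rewrite inE xA connect0. Qed.

Lemma component_of_sub (A : {set T}) x : component_of A x \subset A.
Proof. by apply/subsetP => y; rewrite inE => /andP []. Qed.

Lemma connected_closed_sub (C D : {set T}) x0 :
  connected_set e C -> x0 \in D -> D \subset C ->
  (forall x y, x \in D -> y \in C -> e x y -> y \in D) -> C \subset D.
Proof.
move=> /cards1P [K CK] x0D DC D_closed; apply/subsetP => y yC.
have x0C : x0 \in C := subsetP DC _ x0D.
have := component_of_in_components yC; have := component_of_in_components x0C.
rewrite CK !inE => /eqP x0K /eqP yK.
have : y \in component_of C x0 by rewrite x0K -yK component_of_id.
rewrite inE => /andP [_ x0y].
have D_closed' : closed (induced_rel e C) D.
  move=> u v /= /and3P [euv uC vC]; apply/idP/idP => [uD|vD]; first exact: D_closed euv.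
  by apply: D_closed vD uC _; rewrite e_sym.
by rewrite -(closed_connect D_closed' x0y).
Qed.

Lemma nbhd_in_eq2 (C : {set T}) x a b : #|nbhd_in e C x| = 2 ->
  a \in nbhd_in e C x -> b \in nbhd_in e C x -> a != b -> nbhd_in e C x = [set a; b].
Proof.
move=> N2 aN bN ab; apply/eqP; rewrite eq_sym eqEcard N2 cards2 ab andbT.
by apply/subsetP => z /set2P [] ->.
Qed.

Lemma card_nbhd_in2 (D : {set T}) x y1 y2 :
  (forall y, y \in D -> e x y -> y = y1 \/ y = y2) -> y1 \in D -> y2 \in D ->
  e x y1 -> e x y2 -> y1 != y2 -> #|nbhd_in e D x| = 2.
Proof.
move=> only12 y1D y2D xy1 xy2 y12.
suff -> : nbhd_in e D x = [set y1; y2] by rewrite cards2 y12.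
apply/setP => y; rewrite inE.
by apply/andP/set2P => [[yD xy]|[]->]; [exact: only12 | split | split].
Qed.

Definition other (C : {set T}) x p := odflt x [pick y in nbhd_in e C x | y != p].

Lemma other_nbhd (C : {set T}) x p : #|nbhd_in e C x| = 2 -> p \in nbhd_in e C x ->
  other C x p \in nbhd_in e C x /\ other C x p != p.
Proof.
move=> N2 pN; rewrite /other; case: pickP => [y /andP [] //|only_p].
suff : #|nbhd_in e C x| <= 1 by rewrite N2.
rewrite -(cards1 p); apply/subset_leq_card/subsetP => z zN.
by move: (only_p z); rewrite zN inE /= => /negbT; rewrite negbK.
Qed.

Section HoleWalk.
Variables (C : {set T}) (x0 x1 : T).
Hypothesis deg2 : forall x, x \in C -> #|nbhd_in e C x| = 2.
Hypothesis x0C : x0 \in C.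
Hypothesis x01 : x1 \in nbhd_in e C x0.

(* The state is the pair (current node, next node): in a 2-regular graph, [other] leaves each node
   through the edge we did not arrive by. *)
Definition walk_step (q : T * T) := (q.2, other C q.2 q.1).
Definition walk_pair k := iter k walk_step (x0, x1).
Definition walk k := (walk_pair k).1.

Lemma walk_pairE k : walk_pair k = (walk k, walk k.+1).
Proof. by rewrite /walk /walk_pair iterS; case: (iter _ _ _). Qed.

Lemma walkSS k : walk k.+2 = other C (walk k.+1) (walk k).
Proof. by rewrite /walk /= walk_pairE. Qed.

Lemma walk_edge k : [/\ walk k \in C, walk k.+1 \in C & e (walk k) (walk k.+1)].
Proof.
elim: k => [|k [kC k1C ek]]; first by move: x01; rewrite inE => /andP [x1C x01e]; split.
have kN : walk k \in nbhd_in e C (walk k.+1) by rewrite inE kC e_sym.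
have [k2N _] := other_nbhd (deg2 k1C) kN.
by move: k2N; rewrite inE -walkSS => /andP [].
Qed.

Lemma walk_in k : walk k \in C. Proof. by case: (walk_edge k). Qed.

Lemma walk_adj k : e (walk k) (walk k.+1). Proof. by case: (walk_edge k). Qed.

Lemma walk_nback k : walk k.+2 != walk k.
Proof.
have kN : walk k \in nbhd_in e C (walk k.+1) by rewrite inE walk_in e_sym walk_adj.
by have [_] := other_nbhd (deg2 (walk_in k.+1)) kN; rewrite walkSS.
Qed.

Lemma walk_nbhd k : nbhd_in e C (walk k.+1) = [set walk k; walk k.+2].
Proof.
apply: nbhd_in_eq2; first exact: deg2 (walk_in _).
- by rewrite inE walk_in e_sym walk_adj.
- by rewrite inE walk_in walk_adj.
- by rewrite eq_sym walk_nback.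
Qed.

Lemma walk_repeats : exists j, (j <= #|C|) && [exists i : 'I_j, walk i == walk j].
Proof.
have [/existsP [j rep]|no_rep] := boolP [exists j : 'I_#|C|.+1, [exists i : 'I_j, walk i == walk j]].
  by exists j; rewrite -ltnS ltn_ord rep.
have inj : injective (fun i : 'I_#|C|.+1 => walk i).
  move=> i k /= ik; apply/val_inj; case: (ltngtP i k) => // lt; case/negP: no_rep; apply/existsP.
    by exists k; apply/existsP; exists (Ordinal lt); rewrite /= -ik.
  by exists i; apply/existsP; exists (Ordinal lt); rewrite /= ik.
have : [set walk (val i) | i : 'I_#|C|.+1] \subset C.
  by apply/subsetP => z /imsetP [i _ ->]; exact: walk_in.
by move/subset_leq_card; rewrite card_imset // card_ord ltnn.
Qed.

Lemma walk_first_repeat : exists j i,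
  [/\ j <= #|C|, i < j, walk i = walk j & forall k l, k < j -> l < j -> walk k = walk l -> k = l].
Proof.
have [j /andP [jC /existsP [i /eqP ij]] jmin] := ex_minnP walk_repeats.
exists j, i; split => // k l kj lj kl.
suff no_lt p q : p < j -> q < p -> walk q = walk p -> False.
  by case: (ltngtP k l) => // lt; [case: (no_lt l k) | case: (no_lt k l)].
move=> pj qp qpE; have : j <= p; last by rewrite leqNgt pj.
apply: jmin; rewrite (leq_trans (ltnW pj) jC).
by apply/existsP; exists (Ordinal qp); rewrite /= qpE.
Qed.

Lemma walk_first_return : exists2 n, 3 <= n <= #|C| &
  walk n = walk 0 /\ forall k l, k < n -> l < n -> walk k = walk l -> k = l.
Proof.
have [n [i [nC i_n ni inj]]] := walk_first_repeat.
have i0 : i = 0.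
  case: i i_n ni => // i i_n ni.
  have n_pos : 0 < n by apply: leq_ltn_trans i_n.
  have nN : walk n.-1 \in nbhd_in e C (walk i.+1).
    by rewrite ni inE walk_in e_sym -{2}(prednK n_pos) walk_adj.
  rewrite walk_nbhd !inE in nN; case/orP: nN => /eqP nN.
    by have := inj _ _ (_ : n.-1 < n) (_ : i < n) nN; lia.
  case: (ltnP i.+2 n) => i2n.
    have n1 := inj _ _ (_ : n.-1 < n) i2n nN.
    have n3 : n = i.+3 by lia.
    by move: (walk_nback i.+1); rewrite ni n3 eqxx.
  have n2 : n = i.+2 by lia.
  by rewrite n2 /= in nN; move: (walk_adj i.+1); rewrite nN e_irr.
subst i; exists n => //; rewrite nC andbT ltnNge; apply/negP => n_le2.
have [n1|n2] : n = 1 \/ n = 2 by lia.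
  by move: (walk_adj 0); rewrite ni n1 e_irr.
by move: (walk_nback 0); rewrite ni n2 eqxx.
Qed.

Section FirstReturn.
Variable n : nat.
Hypothesis n_ge3 : 3 <= n.
Hypothesis walk_n : walk n = walk 0.
Hypothesis walk_inj : forall k l, k < n -> l < n -> walk k = walk l -> k = l.

Lemma walk_nbhd0 : nbhd_in e C (walk 0) = [set walk 1; walk n.-1].
Proof.
have n1n : n.-1.+1 = n by lia.
apply: nbhd_in_eq2; first exact: deg2 (walk_in 0).
- by rewrite inE walk_in walk_adj.
- by rewrite inE walk_in -walk_n -{1}n1n e_sym walk_adj.
- by apply/eqP => /walk_inj; lia.
Qed.

Lemma walk_periodic i : walk (i + n) = walk i.
Proof.
have n1 : walk n.+1 = walk 1.
  have : walk n.+1 \in nbhd_in e C (walk 0) by rewrite -walk_n inE walk_in walk_adj.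
  rewrite walk_nbhd0 !inE => /orP [/eqP //|/eqP n1].
  by move: (walk_nback n.-1); rewrite (_ : n.-1.+2 = n.+1) ?n1 ?eqxx //; lia.
have pair_n : walk_pair n = walk_pair 0 by rewrite walk_pairE walk_n n1.
by rewrite /walk /walk_pair iterD -/(walk_pair n) pair_n.
Qed.

Lemma walk_cyc_adj i k : i < n -> k < n -> e (walk i) (walk k) -> cyc_adj n i k.
Proof.
move=> i_n k_n ik.
have kN : walk k \in nbhd_in e C (walk i) by rewrite inE walk_in ik.
rewrite /cyc_adj; case: i i_n kN {ik} => [|i] i_n kN.
  rewrite walk_nbhd0 !inE in kN; case/orP: kN => /eqP /walk_inj; lia.
rewrite walk_nbhd !inE in kN; case/orP: kN => /eqP kN; first by have := walk_inj k_n _ kN; lia.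
case: (ltnP i.+2 n) => i2n; first by have := walk_inj k_n i2n kN; lia.
have n2 : i.+2 = n by lia.
by rewrite n2 walk_n in kN; have := walk_inj k_n _ kN; lia.
Qed.

Lemma walk_cover : connected_set e C -> C \subset [set walk (val i) | i : 'I_n].
Proof.
move=> connC; set D := [set walk (val i) | i : 'I_n].
have inD k : k < n -> walk k \in D by move=> k_n; apply/imsetP; exists (Ordinal k_n).
apply: (connected_closed_sub connC (inD 0 _)); first lia.
  by apply/subsetP => z /imsetP [i _ ->]; exact: walk_in.
move=> x y /imsetP [[k k_n] _ ->] yC /= xy.
have yN : y \in nbhd_in e C (walk k) by rewrite inE yC xy.
case: k k_n yN {xy} => [|k] k_n yN.
  by rewrite walk_nbhd0 !inE in yN; case/orP: yN => /eqP ->; apply: inD; lia.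
rewrite walk_nbhd !inE in yN; case/orP: yN => /eqP ->; first by apply: inD; lia.
case: (ltnP k.+2 n) => k2n; first exact: inD.
by rewrite (_ : k.+2 = n) ?walk_n; [apply: inD | ]; lia.
Qed.

End FirstReturn.
End HoleWalk.

Definition circular_enum (C : {set T}) (n : nat) (f : nat -> T) :=
  [/\ forall i, f i \in C, forall i, f (i + n) = f i,
      forall i k, i < n -> k < n -> f i = f k -> i = k,
      forall i, e (f i) (f i.+1) &
      [/\ forall i k, i < n -> k < n -> e (f i) (f k) -> cyc_adj n i k &
          forall x, x \in C -> exists2 i, i < n & x = f i]].

Lemma hole_circular_enum (C : {set T}) x0 :
  hole e C -> x0 \in C ->
  exists2 f, circular_enum C #|C| f & f 0 = x0.
Proof.
move=> [_ connC deg2] x0C.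
have [x1 x01] : exists x1, x1 \in nbhd_in e C x0.
  by apply/set0Pn; rewrite -card_gt0 deg2.
have [n /andP [n_ge3 nC] [walk_n walk_inj]] := walk_first_return deg2 x0C x01.
have cover := walk_cover deg2 x0C x01 n_ge3 walk_n walk_inj connC.
have Cn : #|C| = n.
  apply/eqP; rewrite eqn_leq nC (leq_trans (subset_leq_card cover)) //.
  by rewrite (leq_trans (leq_imset_card _ _)) // card_ord.
rewrite Cn; exists (walk C x0 x1) => //; split.
- exact: walk_in.
- exact: walk_periodic.
- exact: walk_inj.
- exact: walk_adj.
split; first exact: walk_cyc_adj.
by move=> x /(subsetP cover) /imsetP [[k k_n] _ ->]; exists k.
Qed.

Section PathApex.
Variables (p : nat -> T) (s : T) (m : nat).
Hypothesis m_ge2 : 2 <= m.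
Hypothesis p_inj : forall t u, t <= m -> u <= m -> p t = p u -> t = u.
Hypothesis p_adj : forall t u, t <= m -> u <= m -> e (p t) (p u) = (u == t.+1) || (t == u.+1).
Hypothesis s_notin_p : forall t, t <= m -> s != p t.
Hypothesis s_adj : forall t, t <= m -> e s (p t) = (t == 0) || (t == m).

Let D := s |: [set p (val t) | t : 'I_m.+1].

Let in_D t : t <= m -> p t \in D.
Proof. by move=> tm; apply/setU1r/imsetP; exists (Ordinal (tm : t < m.+1)). Qed.

Let D_cases y : y \in D -> y = s \/ exists2 t, t <= m & y = p t.
Proof. by case/setU1P => [->|/imsetP [[t tm] _ ->]]; [left | right; exists t]. Qed.

Lemma card_path_apex : #|D| = m.+2.
Proof.
rewrite cardsU1 card_imset ?card_ord; last first.
  by move=> t u /= /p_inj tu; apply/val_inj/tu; rewrite -ltnS.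
suff -> : s \notin [set p (val t) | t : 'I_m.+1] by [].
by apply/imsetP => [[[t tm] _ /= st]]; move: (s_notin_p tm); rewrite st eqxx.
Qed.

Lemma path_apex_connected : connected_set e D.
Proof.
have sD : s \in D by apply: setU11.
have s_to_p t : t <= m -> connect (induced_rel e D) s (p t).
  elim: t => [|t IH] tm; first by apply/connect1/and3P; rewrite s_adj ?eqxx ?in_D.
  apply: connect_trans (IH (ltnW tm)) (connect1 _).
  by apply/and3P; rewrite p_adj ?(ltnW tm) ?eqxx ?in_D ?(ltnW tm).
have s_to x : x \in D -> connect (induced_rel e D) s x.
  by case/D_cases => [->|[t tm ->]]; [exact: connect0 | exact: s_to_p].
have symD := sym_connect_sym (induced_rel_sym D).
rewrite /connected_set (_ : components e D = [set component_of D s]) ?cards1 //.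
apply/setP => K; rewrite inE; apply/imsetP/eqP => [[x xD ->]|->]; last by exists s.
apply/setP => y; rewrite !inE; congr andb; apply/idP/idP => [xy|sy].
  exact: connect_trans (s_to x xD) xy.
by apply: connect_trans sy; rewrite symD s_to.
Qed.

Lemma path_apex_deg2 x : x \in D -> #|nbhd_in e D x| = 2.
Proof.
have sD : s \in D by apply: setU11.
case/D_cases => [->|[t tm ->]].
  apply: (card_nbhd_in2 (y1 := p 0) (y2 := p m)).
  - move=> y /D_cases [->|[u um ->]]; first by rewrite e_irr.
    by rewrite s_adj // => /orP [] /eqP ->; [left|right].
  - exact: in_D.
  - exact: in_D.
  - by rewrite s_adj // eqxx.
  - by rewrite s_adj // eqxx orbT.
  - by apply/eqP => /p_inj; lia.
have [->|t_pos] := posnP t.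
  apply: (card_nbhd_in2 (y1 := s) (y2 := p 1)).
  - move=> y /D_cases [->|[u um ->]]; first by left.
    by rewrite p_adj //= orbF => /eqP ->; right.
  - exact: sD.
  - by apply: in_D; lia.
  - by rewrite e_sym s_adj // eqxx.
  - by rewrite p_adj //; lia.
  - by apply: s_notin_p; lia.
have [->|t_lt] : t = m \/ t < m by lia.
  apply: (card_nbhd_in2 (y1 := s) (y2 := p m.-1)).
  - move=> y /D_cases [->|[u um ->]]; first by left.
    by rewrite p_adj // => /orP [] /eqP uE; [lia | right; rewrite uE].
  - exact: sD.
  - by apply: in_D; lia.
  - by rewrite e_sym s_adj // eqxx orbT.
  - by rewrite p_adj //; lia.
  - by apply: s_notin_p; lia.
apply: (card_nbhd_in2 (y1 := p t.-1) (y2 := p t.+1)).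
- move=> y /D_cases [->|[u um ->]]; first by rewrite e_sym s_adj //; lia.
  by rewrite p_adj // => /orP [] /eqP ->; [right | left].
- by apply: in_D; lia.
- by apply: in_D; lia.
- by rewrite p_adj //; lia.
- by rewrite p_adj //; lia.
- by apply/eqP => /p_inj; lia.
Qed.

Lemma path_apex_hole : hole e D /\ #|D| = m.+2.
Proof.
split; last exact: card_path_apex.
by split; [rewrite card_path_apex; lia | exact: path_apex_connected | exact: path_apex_deg2].
Qed.

End PathApex.

Lemma arc_apex_hole (C : {set T}) n f s i m :
  circular_enum C n f -> s \notin C -> i < n -> 2 <= m -> m <= n - 2 ->
  e s (f i) -> e s (f (i + m)) -> (forall t, 0 < t < m -> ~~ e s (f (i + t))) ->
  hole e (s |: [set f (i + val t) | t : 'I_m.+1]) /\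
  #|s |: [set f (i + val t) | t : 'I_m.+1]| = m.+2.
Proof.
case=> fC f_per f_inj f_adj [f_cyc _] sC i_n m2 mn s0 sm s_int.
(* Reduce arc indices, which stay below [2n], into [0, n). *)
pose r x := if x < n then x else x - n.
have r_spec x : (x < n /\ r x = x) \/ (n <= x /\ r x = x - n).
  by rewrite /r; case: ifP => xn; [left | right]; split => //; lia.
have f_r x : f x = f (r x).
  rewrite /r; case: ifP => // xn.
  by rewrite -{1}(subnK (_ : n <= x)) ?f_per //; lia.
have r_lt x : x < n + n -> r x < n by case: (r_spec x); lia.
apply: (path_apex_hole (p := fun t => f (i + t))) => //.
- move=> t u tm um /=; rewrite (f_r (i + t)) (f_r (i + u)) => ftu.
  have it : i + t < n + n by lia.
  have iu : i + u < n + n by lia.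
  have := f_inj _ _ (r_lt _ it) (r_lt _ iu) ftu.
  by case: (r_spec (i + t)); case: (r_spec (i + u)); lia.
- move=> t u tm um /=; apply/idP/idP => [|/orP [] /eqP ->]; last 2 first.
  + by rewrite addnS f_adj.
  + by rewrite addnS e_sym f_adj.
  rewrite (f_r (i + t)) (f_r (i + u)) => ftu.
  have it : i + t < n + n by lia.
  have iu : i + u < n + n by lia.
  have := f_cyc _ _ (r_lt _ it) (r_lt _ iu) ftu.
  by rewrite /cyc_adj; case: (r_spec (i + t)); case: (r_spec (i + u)); lia.
- by move=> t _; apply/eqP => st; move: sC; rewrite st fC.
- move=> t tm; apply/idP/idP => [st|/orP [] /eqP ->]; rewrite ?addn0 //.
  by apply/negPn/negP => t_int; move: (s_int t); rewrite st; lia.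
Qed.

Lemma component_of_two_edge (A K L : {set T}) u v x :
  A = K :|: L -> K = [set u; v] -> e u v ->
  (forall y z, y \in K -> z \in L -> ~~ e y z) -> x \in K -> component_of A x = K.
Proof.
move=> AKL Kuv euv noKL xK.
have K_closed : closed (induced_rel e A) K.
  move=> y z /= /and3P [yz yA zA]; apply/idP/idP => [yK|zK].
    by move: zA yz; rewrite AKL inE => /orP [//|zL]; rewrite (negbTE (noKL _ _ yK zL)).
  by move: yA yz; rewrite AKL inE e_sym => /orP [//|yL]; rewrite (negbTE (noKL _ _ zK yL)).
apply/setP => y; rewrite inE; apply/andP/idP => [[_ xy]|yK].
  by rewrite -(closed_connect K_closed xy).
split; first by rewrite AKL inE yK.
have uvA : (u \in A) && (v \in A) by rewrite AKL !inE Kuv !inE !eqxx !orbT.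
case/andP: uvA => uA vA.
move: xK yK; rewrite Kuv => /set2P [] -> /set2P [] ->; rewrite ?connect0 //;
  by apply/connect1/and3P; split; rewrite // e_sym.
Qed.

Lemma components_two_edges (A : {set T}) u1 v1 u2 v2 :
  A = [set u1; v1] :|: [set u2; v2] -> e u1 v1 -> e u2 v2 ->
  (forall x y, x \in [set u1; v1] -> y \in [set u2; v2] -> ~~ e x y) ->
  u1 \notin [set u2; v2] ->
  #|components e A| = 2 /\ (forall K, K \in components e A -> #|K| = 2).
Proof.
move=> A_def e1 e2 no12 u1_out.
have no21 x y : x \in [set u2; v2] -> y \in [set u1; v1] -> ~~ e x y.
  by move=> xK yK; rewrite e_sym no12.
have comp1 := component_of_two_edge A_def erefl e1 no12.
have comp2 := component_of_two_edge (etrans A_def (setUC _ _)) erefl e2 no21.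
have compsE : components e A = [set [set u1; v1]; [set u2; v2]].
  apply/setP => K; apply/imsetP/set2P => [[x xA ->]|[]->].
  - change (component_of A x = [set u1; v1] \/ component_of A x = [set u2; v2]).
    by rewrite A_def inE in xA; case/orP: xA => [/comp1|/comp2] ->; [left|right].
  - by exists u1; [rewrite A_def inE set21 | symmetry; apply: comp1; rewrite set21].
  - by exists u2; [rewrite A_def inE set21 orbT | symmetry; apply: comp2; rewrite set21].
have K12 : [set u1; v1] != [set u2; v2] by apply/eqP => K12; rewrite -K12 set21 in u1_out.
have card2 u v : e u v -> #|[set u; v]| = 2.
  by move=> uv; rewrite cards2; case: eqP uv => // ->; rewrite e_irr.
by rewrite compsE cards2 K12; split => // K /set2P [] ->; apply: card2.
Qed.

Section StarOnHole.
Variables (VH C : {set T}) (s : T) (n : nat) (f : nat -> T).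
Hypothesis f_enum : circular_enum C n f.
Hypothesis C_card : #|C| = n.
Hypothesis C_shortest : shortest_even_hole e VH C.
Hypothesis sVH : s \in VH.
Hypothesis sC : s \notin C.
Hypothesis s_not_major : ~ major e C s.
Hypothesis s_not_n22 : ~ n22 e C s.

Lemma spread_neighbours_major i k l :
  i + 2 <= k -> k + 2 <= l -> l < n -> l + 2 <= i + n ->
  e s (f i) -> e s (f k) -> e s (f l) -> major e C s.
Proof.
have [fC _ f_inj _ [f_cyc _]] := f_enum.
move=> ik kl ln li si sk sl; split => //.
have inN t : e s (f t) -> f t \in nbhd_in e C s by rewrite inE fC.
have neq t u : t < n -> u < n -> t != u -> f t != f u.
  by move=> tn un tu; apply: contra tu => /eqP /f_inj; rewrite eq_sym => ->.
have nadj t u : t < n -> u < n -> ~ cyc_adj n t u -> ~~ e (f t) (f u).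
  by move=> tn un tu; apply/negP => /f_cyc; auto.
exists (f i), (f k), (f l); split.
- by split; apply: inN.
- by split; apply: neq; lia.
- by split; apply: nadj; rewrite /cyc_adj; lia.
Qed.

Lemma arc_apex_even_long i m : i < n -> 2 <= m -> m <= n - 2 ->
  e s (f i) -> e s (f (i + m)) -> (forall t, 0 < t < m -> ~~ e s (f (i + t))) ->
  ~~ odd m -> n <= m.+2.
Proof.
move=> i_n m2 mn si sm s_int m_even.
have [fC _ _ _ _] := f_enum.
have [hole_D card_D] := arc_apex_hole f_enum sC i_n m2 mn si sm s_int.
rewrite -C_card -card_D; apply: C_shortest.2; split; last by rewrite card_D /= negbK.
split => //; apply/subsetP => y /setU1P [->//|/imsetP [t _ ->]].
by apply: (subsetP C_shortest.1.1.1); rewrite fC.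
Qed.

Lemma complementary_arcs_absurd i1 m1 i2 m2 :
  i1 < n -> 2 <= m1 -> e s (f i1) -> e s (f (i1 + m1)) ->
  (forall t, 0 < t < m1 -> ~~ e s (f (i1 + t))) ->
  i2 < n -> 2 <= m2 -> e s (f i2) -> e s (f (i2 + m2)) ->
  (forall t, 0 < t < m2 -> ~~ e s (f (i2 + t))) ->
  m1 + m2 = n.-1 -> False.
Proof.
move=> i1n m1_2 s1 s1m int1 i2n m2_2 s2 s2m int2 sum.
have n_even : ~~ odd n by rewrite -C_card; exact: C_shortest.1.2.
have odd_sum : odd m1 (+) odd m2.
  by rewrite -oddD sum; move: n_even; rewrite -{1}(prednK (_ : 0 < n)) /= ?negbK //; lia.
have [m1_odd|m1_even] := boolP (odd m1).
  rewrite m1_odd /= in odd_sum.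
  by have := arc_apex_even_long i2n m2_2 _ s2 s2m int2 odd_sum; lia.
by have := arc_apex_even_long i1n m1_2 _ s1 s1m int1 m1_even; lia.
Qed.

Lemma two_edge_neighbours_n22 a b : 0 < a -> a.+3 < b -> b < n ->
  (forall i, i < n -> e s (f i) -> a <= i <= a.+1 \/ b.-1 <= i <= b) ->
  e s (f a) -> e s (f a.+1) -> e s (f b.-1) -> e s (f b) -> n22 e C s.
Proof.
have [fC _ f_inj f_adj [f_cyc f_surj]] := f_enum.
move=> a_pos ab bn loc sa sa1 sb1 sb.
have nadj t u : t < n -> u < n -> ~ cyc_adj n t u -> ~~ e (f t) (f u).
  by move=> tn un tu; apply/negP => /f_cyc; auto.
have b1b : (b.-1).+1 = b by lia.
have N_def : nbhd_in e C s = [set f a; f a.+1] :|: [set f b.-1; f b].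
  apply/setP => y; rewrite !inE; apply/andP/idP => [[/f_surj [i i_n ->] si]|].
    move/(loc i i_n): si => i_range.
    have : i = a \/ i = a.+1 \/ i = b.-1 \/ i = b by lia.
    by case=> [->|[->|[->|->]]]; rewrite !eqxx ?orbT.
  by case/orP => [/orP []|/orP []] /eqP ->; rewrite fC.
have [comps2 comp_card] : #|components e (nbhd_in e C s)| = 2 /\
    (forall K, K \in components e (nbhd_in e C s) -> #|K| = 2).
  apply: components_two_edges N_def _ _ _ _.
  - exact: f_adj.
  - by rewrite -{2}b1b f_adj.
  - by move=> x y /set2P [] -> /set2P [] ->; apply: nadj; rewrite /cyc_adj; lia.
  - rewrite !inE negb_or; apply/andP; split; apply/eqP => /f_inj; lia.
split => //; apply/set0Pn; exists (f a); by rewrite inE fC.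
Qed.

Lemma star_neighbours_two_vertices a a' b' b :
  0 < a -> a <= a' -> a'.+1 < b' -> b' <= b -> b < n ->
  (forall i, i < n -> e s (f i) -> a <= i <= a' \/ b' <= i <= b) ->
  e s (f a) -> e s (f a') -> e s (f b') -> e s (f b) -> a' = a /\ b' = b.
Proof.
have [_ f_per _ _ _] := f_enum.
move=> a_pos aa' a'b' b'b bn loc sa sa' sb' sb.
have a'_le : a' <= a.+1.
  rewrite leqNgt; apply/negP => lt; apply: s_not_major.
  by apply: (spread_neighbours_major (i := a) (k := a') (l := b')) => //; lia.
have b_le : b <= b'.+1.
  rewrite leqNgt; apply/negP => lt; apply: s_not_major.
  by apply: (spread_neighbours_major (i := a') (k := b') (l := b)) => //; lia.
have far i : i < n -> ~ (a <= i <= a' \/ b' <= i <= b) -> ~~ e s (f i).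
  by move=> i_n out; apply/negP => /(loc i i_n).
have [[a'E b'E]|[[a'E b'E]|one_edge]] :
    (a' = a /\ b' = b) \/ (a' = a.+1 /\ b' = b.-1) \/ a' - a + (b - b') = 1 by lia.
- by [].
- case: s_not_n22; apply: (two_edge_neighbours_n22 (a := a) (b := b)); rewrite -?a'E -?b'E //; lia.
exfalso; apply: (complementary_arcs_absurd (i1 := a') (m1 := b' - a') (i2 := b) (m2 := n - b + a)).
- lia.
- lia.
- exact: sa'.
- by rewrite subnKC //; lia.
- by move=> t t_range; apply: far; lia.
- exact: bn.
- lia.
- exact: sb.
- by rewrite (_ : b + (n - b + a) = a + n) ?f_per //; lia.
- move=> t t_range; have [bt_n|n_bt] := ltnP (b + t) n; first by apply: far; lia.
  by rewrite -(subnK n_bt) f_per; apply: far; lia.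
- lia.
Qed.

End StarOnHole.

Definition doubly_attached_pair (VH S : {set T}) := exists s1 s2 B1 B2,
  [/\ [/\ s1 \in S, s2 \in S, s1 != s2 & ~~ e s1 s2],
      [/\ B1 \in components e (VH :\: S), B2 \in components e (VH :\: S) & B1 != B2] &
      [/\ [set s1; s2] \subset nbhd_of_set e VH B1 &
          [set s1; s2] \subset nbhd_of_set e VH B2]].

Section StarCutset.
Variables (VH S C : {set T}) (s : T) (n : nat) (f : nat -> T).
Hypothesis S_def : S = closed_nbhd e VH s.
Hypothesis sVH : s \in VH.
Hypothesis f_enum : circular_enum C n f.
Hypothesis CVH : C \subset VH.

Let R := induced_rel e (VH :\: S).

Lemma S_sub : S \subset VH.
Proof. by rewrite S_def; apply/subsetP => x /setU1P [->|]; rewrite // inE => /andP []. Qed.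

Lemma enum_connect_off_S i k :
  i <= k -> (forall t, i <= t <= k -> f t \notin S) -> connect R (f i) (f k).
Proof.
have [fC _ _ f_adj _] := f_enum.
have off_S t : f t \notin S -> f t \in VH :\: S by rewrite inE => ->; rewrite (subsetP CVH) ?fC.
elim: k => [|k IH] ik off.
  by rewrite (_ : i = 0) ?connect0 //; lia.
have [kSi|ik'] := ltnP k i; first by rewrite (_ : i = k.+1) ?connect0 //; lia.
apply: connect_trans (IH ik' _) (connect1 _); first by move=> t t_range; apply: off; lia.
by apply/and3P; split; [exact: f_adj | apply/off_S/off | apply/off_S/off]; lia.
Qed.

Lemma enum_in_component_off_S i k :
  i <= k -> (forall t, i <= t <= k -> f t \notin S) ->
  f k \in component_of (VH :\: S) (f i) /\ f i \in component_of (VH :\: S) (f k).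
Proof.
have [fC _ _ _ _] := f_enum.
move=> ik off; have ik_conn := enum_connect_off_S ik off.
have R_sym := sym_connect_sym (induced_rel_sym (VH :\: S)).
have off_S t : i <= t <= k -> f t \in VH :\: S.
  by move=> t_range; rewrite inE off // (subsetP CVH) ?fC.
split; rewrite in_set off_S ?leqnn ?ik //=; last rewrite R_sym; exact: ik_conn.
Qed.

Lemma enum_separated_meets_S i k : i <= k -> f i \notin S -> f k \notin S ->
  ~~ connect R (f i) (f k) -> exists2 t, i < t < k & f t \in S.
Proof.
move=> ik fi fk; have [/existsP [t /andP [it tS]]|none] := boolP [exists t : 'I_k, (i < t) && (f t \in S)].
  by exists t; rewrite ?it ?ltn_ord.
case/negP; apply: enum_connect_off_S => // t /andP [it tk].
have [<-|it'] := eqVneq i t; first by [].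
have [->|tk'] := eqVneq t k; first by [].
have t_k : t < k by lia.
apply: contra none => tS; apply/existsP; exists (Ordinal t_k).
by rewrite tS andbT /=; lia.
Qed.

Lemma center_notin_enum a j b : 0 < a < j -> j < b < n ->
  f 0 \notin S -> f j \notin S -> f a \in S -> f b \in S -> s \notin C.
Proof.
have [_ _ f_inj _ [f_cyc f_surj]] := f_enum.
move=> a_range b_range f0 fj fa fb; apply/negP => /f_surj [k k_n sk].
have near t : t < n -> f t \in S -> t = k \/ cyc_adj n k t.
  move=> t_n; rewrite S_def !inE sk => /orP [/eqP /f_inj|/andP [_ /f_cyc]]; auto.
have k0 : k <> 0 by move=> k0; rewrite -k0 -sk S_def setU11 in f0.
have kj : k <> j by move=> kj; rewrite -kj -sk S_def setU11 in fj.
have := near a _ fa; have := near b _ fb; rewrite /cyc_adj; lia.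
Qed.

Lemma attached_of_edge x y z : x \in S -> y \in component_of (VH :\: S) z -> e x y ->
  x \in nbhd_of_set e VH (component_of (VH :\: S) z).
Proof.
move=> xS yB xy; rewrite in_set in_setD (subsetP S_sub _ xS) andbT; apply/andP; split.
  by apply: contraL xS => /(subsetP (component_of_sub _ _)); rewrite in_setD => /andP [].
by apply/exists_inP; exists y.
Qed.

Lemma doubly_attached_of_indices a j b : 0 < a < j -> j < b < n ->
  f a \in S -> f b \in S -> (forall t, t < n -> f t \in S -> t = a \/ t = b) ->
  ~~ connect R (f 0) (f j) -> doubly_attached_pair VH S.
Proof.
have [fC f_per f_inj f_adj [f_cyc _]] := f_enum.
move=> a_range b_range fa fb only_ab not_conn.
have [aj [jb bn]] : a.+1 <= j /\ j <= b.-1 /\ b.+1 <= n by lia.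
have [a_pred b_pred] : (a.-1).+1 = a /\ (b.-1).+1 = b by lia.
have [ab ab_far] : a <> b /\ ~ cyc_adj n a b by rewrite /cyc_adj; lia.
have [a_n b_n] : a < n /\ b < n by lia.
have fn : f n = f 0 by rewrite -(add0n n) f_per.
have off t : t <= n -> t <> a -> t <> b -> f t \notin S.
  move=> t_n ta tb; have [->|t_lt] := eqVneq t n; first by rewrite fn; apply/negP => /only_ab; lia.
  by apply/negP => /only_ab; lia.
have off_left t : t <= a.-1 -> f t \notin S by move=> ta; apply: off; lia.
have off_mid t : a.+1 <= t <= b.-1 -> f t \notin S by move=> tr; apply: off; lia.
have off_right t : b.+1 <= t <= n -> f t \notin S by move=> tr; apply: off; lia.
have [VS0 VSj] : f 0 \in VH :\: S /\ f j \in VH :\: S.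
  by rewrite !in_setD off_left ?off_mid ?aj ?(subsetP CVH) ?fC.
have fa_off : f a.-1 \in component_of (VH :\: S) (f 0).
  by apply: (enum_in_component_off_S (leq0n _) _).1 => t /andP [_]; apply: off_left.
have fa_on : f a.+1 \in component_of (VH :\: S) (f j).
  apply: (enum_in_component_off_S aj _).2 => t /andP [t1 t2].
  by apply: off_mid; rewrite t1 (leq_trans t2 jb).
have fb_on : f b.-1 \in component_of (VH :\: S) (f j).
  apply: (enum_in_component_off_S jb _).1 => t /andP [t1 t2].
  by apply: off_mid; rewrite t2 andbT (leq_trans aj t1).
have fb_off : f b.+1 \in component_of (VH :\: S) (f 0).
  by rewrite -fn; apply: (enum_in_component_off_S bn _).2 => t; apply: off_right.
exists (f a), (f b), (component_of (VH :\: S) (f 0)), (component_of (VH :\: S) (f j)); split.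
- split=> //; first by apply/eqP => /(f_inj _ _ a_n b_n).
  by apply/negP => /(f_cyc _ _ a_n b_n).
- split; [exact: component_of_in_components | exact: component_of_in_components |].
  apply: contra not_conn => /eqP same.
  by have := component_of_id VSj; rewrite -same in_set => /andP [].
split; apply/subsetP => y /set2P [] ->.
- by apply: (attached_of_edge fa fa_off); rewrite e_sym -{2}a_pred f_adj.
- exact: (attached_of_edge fb fb_off (f_adj b)).
- exact: (attached_of_edge fa fa_on (f_adj a)).
- by apply: (attached_of_edge fb fb_on); rewrite e_sym -{2}b_pred f_adj.
Qed.

Lemma doubly_attached_of_separated_enum j :
  #|C| = n -> clean e VH C -> shortest_even_hole e VH C ->
  j < n -> f 0 \notin S -> f j \notin S -> ~~ connect R (f 0) (f j) ->
  doubly_attached_pair VH S.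
Proof.
have [fC f_per _ _ _] := f_enum.
move=> C_card C_clean C_short j_n f0 fj not_conn.
have fn : f n = f 0 by rewrite -(add0n n) f_per.
have j_pos : 0 < j by rewrite lt0n; apply: contraNneq not_conn => ->; exact: connect0.
have [a1 a1_range fa1] := enum_separated_meets_S (leq0n j) f0 fj not_conn.
have [b1 b1_range fb1] : exists2 t, j < t < n & f t \in S.
  apply: enum_separated_meets_S; rewrite ?fn //; first exact: ltnW.
  by rewrite (sym_connect_sym (induced_rel_sym _)).
have [a [a' [b' [b [a_range j_range b_range [fa fa' fb' fb] loc]]]]] :=
  extremal_indices (P := fun t => f t \in S) f0 fj (ex_intro2 _ _ a1 a1_range fa1)
    (ex_intro2 _ _ b1 b1_range fb1).
have [a_pos aa'] := andP a_range; have [a'j jb'] := andP j_range; have [b'b b_n] := andP b_range.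
have a_j : 0 < a < j by rewrite a_pos (leq_ltn_trans aa' a'j).
have j_b : j < b < n by rewrite (leq_trans jb' b'b) b_n.
have sC : s \notin C := center_notin_enum a_j j_b f0 fj fa fb.
have S_eq t : (f t \in S) = e s (f t).
  rewrite S_def !inE (subsetP CVH _ (fC t)) /=.
  by have -> : (f t == s) = false by apply/negbTE; apply: contraNneq sC => <-.
have [s_not_major s_not_n22] := C_clean s sVH.
have [a'E b'E] : a' = a /\ b' = b.
  apply: (star_neighbours_two_vertices f_enum C_card C_short sVH sC s_not_major s_not_n22
            a_pos aa' (leq_ltn_trans a'j jb') b'b b_n); rewrite -?S_eq //.
  by move=> i i_n; rewrite -S_eq; exact: loc.
subst a' b'; apply: (doubly_attached_of_indices a_j j_b fa fb _ not_conn).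
by move=> t t_n /(loc t t_n) [] /andP [h1 h2]; [left | right]; apply/eqP; rewrite eqn_leq h1 h2.
Qed.

End StarCutset.

Lemma doubly_attached_of_uncovered_hole (VH S C : {set T}) s :
  S = closed_nbhd e VH s -> s \in VH -> components e (VH :\: S) != set0 ->
  clean e VH C -> shortest_even_hole e VH C ->
  (forall B, B \in components e (VH :\: S) -> ~~ (C \subset B :|: S)) ->
  doubly_attached_pair VH S.
Proof.
move=> S_def sVH /set0Pn [B0 B0_comp] C_clean C_short uncovered.
have [[[CVH C_hole] _] _] := C_short.
have [x0 x0C x0_out] := subsetPn (uncovered _ B0_comp).
have [f f_enum f0] := hole_circular_enum C_hole x0C.
have [fC _ _ _ [_ f_surj]] := f_enum.
have f0S : f 0 \notin S by move: x0_out; rewrite f0 inE negb_or => /andP [].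
have VS0 : f 0 \in VH :\: S by rewrite in_setD f0S (subsetP CVH) ?fC.
have [x1 x1C x1_out] := subsetPn (uncovered _ (component_of_in_components VS0)).
have [j j_n fj] := f_surj _ x1C; subst x1.
move: x1_out; rewrite in_setU negb_or => /andP [fj_out fjS].
apply: (doubly_attached_of_separated_enum S_def sVH f_enum CVH (j := j)) => //.
by apply: contra fj_out => conn; rewrite in_set in_setD fjS (subsetP CVH) ?fC.
Qed.

End Graph.

Theorem lemma16 (T : finType) (e : rel T) (VH S : {set T}) (u1 u2 u3 : T) :
  simple_graph e ->
  lucky_tracker e VH u1 u2 u3 ->
  full_star_cutset e VH S ->
  (forall C, u_hole e VH u1 u2 u3 C ->
     exists2 B, B \in components e (VH :\: S) & C \subset B :|: S)
  \/
  (exists s1 s2 B1 B2,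
     [/\ [/\ s1 \in S, s2 \in S, s1 != s2 & ~~ e s1 s2],
         [/\ B1 \in components e (VH :\: S), B2 \in components e (VH :\: S) & B1 != B2] &
         [/\ [set s1; s2] \subset nbhd_of_set e VH B1 &
             [set s1; s2] \subset nbhd_of_set e VH B2]]).
Proof.
move=> [e_sym e_irr] _ [[SVH _ more_comps] [s sS S_def]].
have comps : components e (VH :\: S) != set0 by rewrite -card_gt0 (leq_trans _ more_comps).
have [split|no_split] := classic (doubly_attached_pair e VH S); first by right.
left => C [C_clean C_short _].
have [/exists_inP [B B_comp CB]|uncovered] :=
  boolP [exists B in components e (VH :\: S), C \subset B :|: S]; first by exists B.
case: no_split; apply: (doubly_attached_of_uncovered_hole e_sym e_irr S_def (subsetP SVH _ sS) comps C_clean C_short).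
by move=> B B_comp; apply: contra uncovered => CB; apply/exists_inP; exists B.
Qed.
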